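(* Let $K$ be an infinite field containing $\mathbb{F}_q$, let $B\in\mathrm{GL}_n(K)$, and let $N\in\mathrm{GL}_n(K)$ be such that $N^{-1}BN^{(q)}=\Delta$, where $\Delta$ is the matrix with $1$'s on the subdiagonal, last column $(a_0,a_1,\dots,a_{n-1})^T$ and all other entries $0$. Then the splitting fields over $K$ of the systems $BX^{(q)}=X$ and $\Delta^*X^{(q)}=X$ coincide, where $\Delta^*=(\Delta^{-1})^T$.
   Context: $X^{(q)}$, $N^{(q)}$ denote entrywise $q$-th powers. The splitting field over $K$ of $CX^{(q)}=X$ is the subfield of $K_{\mathrm{sep}}$ generated over $K$ by the coordinates of all its solutions in $K_{\mathrm{sep}}^n$. (Such $N$ exists since Frobenius modules over infinite fields are cyclic.) *)

From HB Require Import structures.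
From mathcomp Require Import all_boot all_order all_algebra all_field.
Set Implicit Arguments. Unset Strict Implicit. Unset Printing Implicit Defensive.
Import GRing.Theory.
Local Open Scope ring_scope.

Definition frobmx (R : nzRingType) (q m n : nat) (M : 'M[R]_(m, n)) : 'M[R]_(m, n) :=
  map_mx (fun x => x ^+ q) M.

Definition Delta (R : nzRingType) (n : nat) (a : 'I_n -> R) : 'M[R]_n :=
  \matrix_(i < n, j < n)
    (if (j.+1 == n)%N then a i else if (i == j.+1 :> nat) then 1 else 0).

Definition Delta_star (K : fieldType) (n : nat) (a : 'I_n -> K) : 'M[K]_n :=
  (invmx (Delta a))^T.

Definition is_sep_closure (K L : fieldType) (iota : {rmorphism K -> L}) : Prop :=
  (forall x : L, exists p : {poly K},
      p != 0 /\ separable_poly p /\ root (map_poly iota p) x) /\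
  (forall p : {poly L}, separable_poly p -> (1 < size p)%N -> exists x, root p x).

Definition gen_subfield (K L : fieldType) (iota : {rmorphism K -> L})
    (S : L -> Prop) : L -> Prop :=
  fun x => forall P : L -> Prop,
    (forall k, P (iota k)) -> (forall s, S s -> P s) ->
    (forall u v, P u -> P v -> P (u - v)) ->
    (forall u v, P u -> P v -> P (u * v)) ->
    (forall u, P u -> P u^-1) -> P x.

Definition sol_coords (K L : fieldType) (iota : {rmorphism K -> L}) (q n : nat)
    (C : 'M[K]_n) : L -> Prop :=
  fun s => exists X : 'cV[L]_n,
    map_mx iota C *m frobmx q X = X /\ exists i, X i 0 = s.

Definition splitting_field_sys (K L : fieldType) (iota : {rmorphism K -> L})
    (q n : nat) (C : 'M[K]_n) : L -> Prop :=
  gen_subfield iota (sol_coords iota q C).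

From HB Require Import structures.
From mathcomp Require Import all_boot all_order all_algebra all_field abelian.
Set Implicit Arguments.
Unset Strict Implicit.
Unset Printing Implicit Defensive.
Import GRing.Theory.
Local Open Scope ring_scope.

(* Conjugation by N, which is defined over K, maps the solutions of B X^(q) = X
   onto those of Delta Y^(q) = Y, so these two systems have the same splitting
   field.  For Delta and Delta* = (Delta^-1)^T the point is a pairing: if
   Delta Y^(q) = Y and Z^(q) = Delta^T Z, then Y^T Z is fixed by Frobenius, so its
   entries lie in F_q, inside K.  The system Z^(q) = Delta^T Z, which is
   Delta* Z^(q) = Z, has an invertible fundamental solution W: its columns are the
   Moore vectors (r, r^q, ..., r^(q^(n-1))) of n roots of the q-polynomial
   X^(q^n) - sum_j a_j X^(q^j), chosen F_q-independent.  This polynomial is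
   separable because a_0 <> 0, so its q^n roots exist in L.  Then
   Y^T = (Y^T W) W^-1 expresses the solutions of Delta over the splitting field of
   Delta*, and the converse follows by exchanging the roles of Delta and Delta*. *)

Section GeneratedSubfield.

Variables (K L : fieldType) (iota : {rmorphism K -> L}) (T : L -> Prop).
Local Notation gen := (gen_subfield iota T).

Lemma gen_subfield_base s : T s -> gen s.
Proof. by move=> Ts P _ PT _ _ _; apply: PT. Qed.

Lemma gen_subfield_iota k : gen (iota k).
Proof. by move=> P PK _ _ _ _; apply: PK. Qed.

Lemma gen_subfieldB u v : gen u -> gen v -> gen (u - v).
Proof. by move=> Gu Gv P PK PT PB PM PV; apply: (PB); [apply: Gu | apply: Gv]. Qed.

Lemma gen_subfieldM u v : gen u -> gen v -> gen (u * v).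
Proof. by move=> Gu Gv P PK PT PB PM PV; apply: (PM); [apply: Gu | apply: Gv]. Qed.

Lemma gen_subfieldV u : gen u -> gen u^-1.
Proof. by move=> Gu P PK PT PB PM PV; apply: (PV); apply: Gu. Qed.

Lemma gen_subfield0 : gen 0.
Proof. by rewrite -(rmorph0 iota); apply: gen_subfield_iota. Qed.

Lemma gen_subfield1 : gen 1.
Proof. by rewrite -(rmorph1 iota); apply: gen_subfield_iota. Qed.

Lemma gen_subfieldN u : gen u -> gen (- u).
Proof. by rewrite -sub0r; apply: gen_subfieldB gen_subfield0. Qed.

Lemma gen_subfieldD u v : gen u -> gen v -> gen (u + v).
Proof. by move=> Gu /gen_subfieldN Gv; rewrite -[v]opprK; apply: gen_subfieldB. Qed.

Lemma gen_subfieldX u k : gen u -> gen (u ^+ k).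
Proof.
move=> Gu; elim: k => [|k IHk]; first by rewrite expr0; apply: gen_subfield1.
by rewrite exprS; apply: gen_subfieldM.
Qed.

Lemma gen_subfield_sum (I : Type) (r : seq I) (P : pred I) (F : I -> L) :
  (forall i, P i -> gen (F i)) -> gen (\sum_(i <- r | P i) F i).
Proof. by move=> GF; apply: big_ind => //; [apply: gen_subfield0 | apply: gen_subfieldD]. Qed.

Lemma gen_subfield_prod (I : Type) (r : seq I) (P : pred I) (F : I -> L) :
  (forall i, P i -> gen (F i)) -> gen (\prod_(i <- r | P i) F i).
Proof. by move=> GF; apply: big_ind => //; [apply: gen_subfield1 | apply: gen_subfieldM]. Qed.

Definition mx_in_gen {m n} (M : 'M[L]_(m, n)) := forall i j, gen (M i j).

Lemma mx_in_gen_map m n (M : 'M[K]_(m, n)) : mx_in_gen (map_mx iota M).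
Proof. by move=> i j; rewrite mxE; apply: gen_subfield_iota. Qed.

Lemma mx_in_gen_mul m n p (M : 'M[L]_(m, n)) (M' : 'M[L]_(n, p)) :
  mx_in_gen M -> mx_in_gen M' -> mx_in_gen (M *m M').
Proof.
by move=> GM GM' i j; rewrite mxE; apply: gen_subfield_sum => k _; apply: gen_subfieldM.
Qed.

Lemma gen_subfield_det n (M : 'M[L]_n) : mx_in_gen M -> gen (\det M).
Proof.
move=> GM; apply: gen_subfield_sum => s _; apply: gen_subfieldM.
  by apply: gen_subfieldX; apply: gen_subfieldN; apply: gen_subfield1.
by apply: gen_subfield_prod => i _; apply: GM.
Qed.

Lemma mx_in_gen_inv n (M : 'M[L]_n) : mx_in_gen M -> mx_in_gen (invmx M).
Proof.
move=> GM i j; rewrite /invmx; case: ifP => _; last exact: GM.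
rewrite !mxE; apply: gen_subfieldM; first by apply: gen_subfieldV; apply: gen_subfield_det.
apply: gen_subfieldM; first by apply: gen_subfieldX; apply: gen_subfieldN; apply: gen_subfield1.
by apply: gen_subfield_det => k l; rewrite !mxE.
Qed.

End GeneratedSubfield.

Lemma gen_subfield_min (K L : fieldType) (iota : {rmorphism K -> L}) (S T : L -> Prop) :
  (forall s, S s -> gen_subfield iota T s) ->
  forall x, gen_subfield iota S x -> gen_subfield iota T x.
Proof.
move=> ST x Gx; apply: Gx; [exact: gen_subfield_iota | exact: ST | exact: gen_subfieldB
  | exact: gen_subfieldM | exact: gen_subfieldV].
Qed.

Lemma invmxM (R : comUnitRingType) n (A B : 'M[R]_n) :
  A \in unitmx -> B \in unitmx -> invmx (A *m B) = invmx B *m invmx A.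
Proof.
move=> Au Bu; have ABu : A *m B \in unitmx by rewrite unitmx_mul Au.
by rewrite -[RHS]mul1mx -(mulVmx ABu) -!mulmxA (mulmxA B) mulmxV // mul1mx mulmxV // mulmx1.
Qed.

(* The proof of [pchar L].-nat q is a phantom argument: it only serves to make
   [x ^+ q] a canonical ring morphism. *)
Definition qFrobenius (L : fieldType) (q : nat) (_ : [pchar L].-nat q) (x : L) := x ^+ q.

Lemma qFrobenius_is_zmod_morphism (L : fieldType) q (pcharq : [pchar L].-nat q) :
  zmod_morphism (qFrobenius pcharq).
Proof.
move=> x y; rewrite /qFrobenius exprDn_pchar //; congr (_ + _).
have q_gt0 : (0 < q)%N by case/andP: pcharq.
by apply/eqP; rewrite -addr_eq0 -exprDn_pchar // addNr expr0n eqn0Ngt q_gt0.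
Qed.

Lemma qFrobenius_is_monoid_morphism (L : fieldType) q (pcharq : [pchar L].-nat q) :
  monoid_morphism (qFrobenius pcharq).
Proof. by split=> [|x y]; rewrite /qFrobenius ?expr1n ?exprMn. Qed.

HB.instance Definition _ (L : fieldType) q (pcharq : [pchar L].-nat q) :=
  GRing.isZmodMorphism.Build L L (qFrobenius pcharq) (@qFrobenius_is_zmod_morphism L q pcharq).
HB.instance Definition _ (L : fieldType) q (pcharq : [pchar L].-nat q) :=
  GRing.isMonoidMorphism.Build L L (qFrobenius pcharq)
    (@qFrobenius_is_monoid_morphism L q pcharq).

Lemma frobmx_tr (R : nzRingType) q m n (M : 'M[R]_(m, n)) :
  frobmx q M^T = (frobmx q M)^T.
Proof. by apply/matrixP => i j; rewrite !mxE. Qed.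

Lemma frobmx_map (K L : fieldType) (iota : {rmorphism K -> L}) q m n (M : 'M[K]_(m, n)) :
  frobmx q (map_mx iota M) = map_mx iota (frobmx q M).
Proof. by apply/matrixP => i j; rewrite !mxE rmorphXn. Qed.

Section FrobeniusMatrix.

Variables (L : fieldType) (q : nat).
Hypothesis pcharq : [pchar L].-nat q.

Lemma frobmxE m n (M : 'M[L]_(m, n)) : frobmx q M = map_mx (qFrobenius pcharq) M.
Proof. by []. Qed.

Lemma frobmxM m n p (A : 'M[L]_(m, n)) (B : 'M[L]_(n, p)) :
  frobmx q (A *m B) = frobmx q A *m frobmx q B.
Proof. by rewrite !frobmxE map_mxM. Qed.

Lemma frobmx_unitmx n (A : 'M[L]_n) : (frobmx q A \in unitmx) = (A \in unitmx).
Proof. by rewrite frobmxE map_unitmx. Qed.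

Lemma frobmxV n (A : 'M[L]_n) : frobmx q (invmx A) = invmx (frobmx q A).
Proof. by rewrite !frobmxE map_invmx. Qed.

Lemma frob_fixed_pairing n m m' (D : 'M[L]_n) (Y : 'M[L]_(n, m)) (Z : 'M[L]_(n, m')) :
  D *m frobmx q Y = Y -> frobmx q Z = D^T *m Z -> frobmx q (Y^T *m Z) = Y^T *m Z.
Proof. by move=> DY DZ; rewrite frobmxM frobmx_tr DZ mulmxA -trmx_mul DY. Qed.

End FrobeniusMatrix.


Lemma pchar_nat_card (F : finFieldType) (L : fieldType) (g : {rmorphism F -> L}) :
  [pchar L].-nat #|F|.
Proof.
have [p _ pF] := finPcharP F.
rewrite (eq_pnat _ (pcharf_eq (rmorph_pchar g pF))) -cardsT.
exact: abelem_pgroup (fin_ring_pchar_abelem pF).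
Qed.

Lemma frob_fixed_card (F : finFieldType) (L : fieldType) (g : {rmorphism F -> L}) s :
  s ^+ #|F| = s -> exists c, s = g c.
Proof.
move=> sF; have [/mapP[c _ ->] | sNF] := boolP (s \in map g (enum F)); first by exists c.
have F_gt1 := finNzRing_gt1 F.
pose P : {poly L} := 'X^#|F| - 'X.
have sizeP : size P = #|F|.+1.
  by rewrite size_polyDl ?size_polyXn // size_polyN size_polyX ltnS.
have P_neq0 : P != 0 by rewrite -size_poly_eq0 sizeP.
have rootsP : all (root P) (s :: map g (enum F)).
  rewrite /= /root !hornerE sF subrr eqxx /=; apply/allP => _ /mapP[c _ ->].
  by rewrite /root !hornerE -rmorphXn expf_card subrr.
have uniqP : uniq (s :: map g (enum F)).
  by rewrite /= sNF map_inj_uniq ?enum_uniq //; apply: fmorph_inj.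
by have := max_poly_roots P_neq0 rootsP uniqP; rewrite sizeP /= size_map -cardE ltnn.
Qed.

Section Solutions.

Variables (K L : fieldType) (iota : {rmorphism K -> L}) (q : nat).

Lemma sol_mx_in_gen n m (C : 'M[K]_n) (X : 'M[L]_(n, m)) :
  map_mx iota C *m frobmx q X = X -> mx_in_gen iota (sol_coords iota q C) X.
Proof.
move=> CX i j; apply: gen_subfield_base; exists (col j X); split; last by exists i; rewrite mxE.
by rewrite /frobmx map_col -[in RHS]CX !colE mulmxA.
Qed.

Hypothesis frob_fixed : forall s : L, s ^+ q = s -> exists k, s = iota k.

Lemma frob_fixed_mx_in_gen (T : L -> Prop) m n (M : 'M[L]_(m, n)) :
  frobmx q M = M -> mx_in_gen iota T M.
Proof.
move=> MF i j; have [|k ->] := @frob_fixed (M i j); last exact: gen_subfield_iota.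
by rewrite -[RHS](congr1 (fun M' : 'M_(m, n) => M' i j) MF) mxE.
Qed.

End Solutions.

Section Equivalences.

Variables (K L : fieldType) (iota : {rmorphism K -> L}) (q n : nat).
Hypothesis pcharq : [pchar K].-nat q.

Let pcharqL : [pchar L].-nat q.
Proof. by rewrite (eq_pnat _ (fmorph_pchar iota)). Qed.

Lemma sol_coords_gauge_sub (B D N : 'M[K]_n) :
  N \in unitmx -> invmx N *m B *m frobmx q N = D ->
  forall s, sol_coords iota q B s -> gen_subfield iota (sol_coords iota q D) s.
Proof.
move=> Nu NBD s [X [BX [i <-]]].
have N'u : map_mx iota N \in unitmx by rewrite map_unitmx.
have DY : map_mx iota D *m frobmx q (invmx (map_mx iota N) *m X) = invmx (map_mx iota N) *m X.
  rewrite -NBD !map_mxM -frobmx_map map_invmx frobmxM // frobmxV // -!mulmxA.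
  by rewrite (mulmxA (frobmx q _)) mulmxV ?frobmx_unitmx // mul1mx BX.
have := mx_in_gen_mul (mx_in_gen_map N) (sol_mx_in_gen DY).
by rewrite mulKVmx // => /(_ i 0).
Qed.

Lemma splitting_field_sys_gauge (B D N : 'M[K]_n) :
  N \in unitmx -> invmx N *m B *m frobmx q N = D ->
  forall x, splitting_field_sys iota q B x <-> splitting_field_sys iota q D x.
Proof.
move=> Nu NBD x; split; apply: gen_subfield_min; first exact: sol_coords_gauge_sub NBD.
apply: (@sol_coords_gauge_sub _ _ (invmx N)); first by rewrite unitmx_inv.
rewrite invmxK -NBD frobmxV // !mulmxA mulmxV // mul1mx -mulmxA.
by rewrite mulmxV ?frobmx_unitmx // mulmx1.
Qed.

Hypothesis frob_fixed : forall s : L, s ^+ q = s -> exists k, s = iota k.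

Lemma sol_coords_dual_sub (D : 'M[K]_n) (W : 'M[L]_n) :
  D \in unitmx -> W \in unitmx -> frobmx q W = (map_mx iota D)^T *m W ->
  forall s, sol_coords iota q D s -> gen_subfield iota (sol_coords iota q (invmx D)^T) s.
Proof.
move=> Du Wu WD s [Y [DY [i <-]]].
have D'u : map_mx iota D \in unitmx by rewrite map_unitmx.
have W_sol : map_mx iota (invmx D)^T *m frobmx q W = W.
  by rewrite WD -map_trmx map_invmx mulmxA -trmx_mul mulmxV // trmx1 mul1mx.
have YW_fixed := frob_fixed_pairing pcharqL DY WD.
have := mx_in_gen_mul (frob_fixed_mx_in_gen frob_fixed YW_fixed)
  (mx_in_gen_inv (sol_mx_in_gen W_sol)).
by rewrite mulmxK // => /(_ 0 i); rewrite mxE.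
Qed.

Lemma splitting_field_sys_dual (D : 'M[K]_n) (W : 'M[L]_n) :
  D \in unitmx -> W \in unitmx -> frobmx q W = (map_mx iota D)^T *m W ->
  forall x, splitting_field_sys iota q D x <-> splitting_field_sys iota q (invmx D)^T x.
Proof.
move=> Du Wu WD x; split; apply: gen_subfield_min; first exact: sol_coords_dual_sub WD.
(* The converse is the same inclusion for (D^-1)^T, with fundamental matrix (W^-1)^T. *)
have invmx_trK : (invmx (invmx D)^T)^T = D by rewrite trmx_inv trmxK invmxK.
have map_invmx_trK : (map_mx iota (invmx D)^T)^T = (invmx (map_mx iota D)^T)^T.
  by rewrite [RHS]trmx_inv -map_trmx !trmxK map_invmx.
have := @sol_coords_dual_sub (invmx D)^T (invmx W)^T; rewrite invmx_trK.
apply; rewrite ?unitmx_tr ?unitmx_inv //.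
rewrite frobmx_tr frobmxV // WD invmxM ?unitmx_tr ?map_unitmx // trmx_mul.
by rewrite map_invmx_trK.
Qed.

End Equivalences.

Lemma pchar_nat_natr0 (R : nzRingType) q : [pchar R].-nat q -> (1 < q)%N -> q%:R = 0 :> R.
Proof.
move=> pcharq q_gt1; have pq : pdiv q \in [pchar R] by apply: pnatPpi pcharq _; rewrite pi_pdiv.
by apply/eqP; rewrite -(dvdn_pcharf pq) pdiv_dvd.
Qed.

Lemma sep_closed_uniq_roots (L : fieldType) :
  (forall p : {poly L}, separable_poly p -> (1 < size p)%N -> exists x, root p x) ->
  forall p : {poly L}, separable_poly p ->
  exists rs, [/\ uniq rs, all (root p) rs & size rs = (size p).-1].
Proof.
move=> sep_closed p; elim: {p}(size p) {-2}p (leqnn (size p)) => [|m IHm] p size_p sep_p.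
  by exists [::]; move: size_p; rewrite leqn0 => /eqP ->.
have [size_p_le1 | size_p_gt1] := leqP (size p) 1.
  by exists [::]; case: (size p) size_p_le1 => [|[]].
have [x px] := sep_closed p sep_p size_p_gt1.
have [p' def_p] := factor_theorem p x px.
have p'_neq0 : p' != 0.
  by apply: contraTneq size_p_gt1 => p'0; rewrite def_p p'0 mul0r size_poly0.
move: sep_p; rewrite def_p separable_root => /andP[sep_p' p'Nx].
have size_p' : size p = (size p').+1.
  by rewrite def_p size_mul ?polyXsubC_eq0 // size_XsubC addn2.
have [|rs [uniq_rs p'_rs size_rs]] := IHm p' _ sep_p'; first by rewrite -ltnS -size_p'.
exists (x :: rs); split.
- by rewrite /= uniq_rs andbT; apply: contra p'Nx => /(allP p'_rs).
- rewrite /= rootM root_XsubC eqxx orbT /=.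
  by apply/allP => y /(allP p'_rs) p'y; rewrite rootM p'y.
- by rewrite /= size_rs -def_p size_p' /= prednK // lt0n size_poly_eq0.
Qed.

Section MooreMatrix.

Variables (L : fieldType) (q : nat).
Hypothesis q_gt1 : (1 < q)%N.

Definition moore m (rs : seq L) : 'M[L]_(size rs, m) := \matrix_(i, j) rs`_i ^+ (q ^ j).

Lemma size_sum_qmonomials n (c : 'I_n.+1 -> L) :
  (size (\sum_(j < n.+1) c j *: 'X^(q ^ j) : {poly L})%R <= (q ^ n).+1)%N.
Proof.
apply: leq_trans (size_sum _ _ _) _; apply/bigmax_leqP => j _.
apply: leq_trans (size_scale_leq _ _) _; rewrite size_polyXn ltnS.
by rewrite leq_pexp2l ?(ltnW q_gt1) // -ltnS.
Qed.

(* A linear dependence between the columns of the Moore matrix is a nonzero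
   q-polynomial of degree at most q ^ n vanishing at every entry of rs. *)
Lemma moore_rank n (rs : seq L) :
  uniq rs -> (q ^ n < size rs)%N -> \rank (moore n.+1 rs) = n.+1.
Proof.
move=> uniq_rs size_rs; apply/eqP; rewrite eqn_leq rank_leq_col leqNgt; apply/negP => rank_lt.
have /rowV0Pn[v /sub_kermxP vA v_neq0] : kermx (moore n.+1 rs)^T != 0.
  by rewrite -mxrank_eq0 mxrank_ker mxrank_tr subn_eq0 -ltnNge.
have [j0 vj0] : exists j0, v 0 j0 != 0.
  apply/existsP; apply: contraNT v_neq0; rewrite negb_exists => /forallP v0.
  by apply/eqP/matrixP => i j; rewrite (ord1 i) mxE; apply/eqP/negPn/v0.
pose Q : {poly L} := \sum_(j < n.+1) v 0 j *: 'X^(q ^ j).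
have Q_neq0 : Q != 0.
  apply: contraNneq vj0 => /(congr1 (coefp (q ^ j0))).
  rewrite /= coef0 coef_sum (bigD1 j0) //= big1 ?addr0 => [|j j_neq_j0].
    by rewrite coefZ coefXn eqxx mulr1 => ->.
  by rewrite coefZ coefXn eqn_exp2l // (inj_eq val_inj) eq_sym (negbTE j_neq_j0) mulr0.
have rs_rootsQ : all (root Q) rs.
  apply/allP => _ /(nthP 0)[i i_lt <-].
  have := congr1 (fun M : 'M[L]_(1, size rs) => M 0 (Ordinal i_lt)) vA; rewrite !mxE => vAi.
  rewrite /root /Q horner_sum -[X in _ == X]vAi; apply/eqP/eq_bigr => j _.
  by rewrite hornerZ hornerXn !mxE.
have := leq_trans (max_poly_roots Q_neq0 rs_rootsQ uniq_rs) (size_sum_qmonomials _).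
by rewrite ltnS leqNgt size_rs.
Qed.

End MooreMatrix.

Lemma map_Delta (R S : nzRingType) (f : {rmorphism R -> S}) n (a : 'I_n -> R) :
  map_mx f (Delta a) = Delta (f \o a).
Proof.
by apply/matrixP => i j; rewrite !mxE; case: ifP => // _; case: ifP; rewrite ?rmorph1 ?rmorph0.
Qed.

Lemma Delta_unitmx_coef0 (R : comUnitRingType) n (a : 'I_n.+1 -> R) :
  Delta a \in unitmx -> a ord0 != 0.
Proof.
move=> Du; apply/eqP => a0.
have row0_Delta : row 0 (Delta a) = 0.
  by apply/matrixP => i j; rewrite !mxE; case: ifP.
have := congr1 (row 0) (mulmxV Du); rewrite row_mul row0_Delta mul0mx.
move/(congr1 (fun M : 'M[R]_(1, n.+1) => M 0 0)); rewrite !mxE /= => /eqP.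
by rewrite eq_sym oner_eq0.
Qed.

Section DeltaQPolynomial.

Variables (L : fieldType) (q : nat).

Definition qpoly n (a : 'I_n -> L) : {poly L} := 'X^(q ^ n) - \sum_(j < n) a j *: 'X^(q ^ j).

Lemma qpoly_root_frob n (a : 'I_n -> L) r : root (qpoly a) r ->
  frobmx q (\col_j r ^+ (q ^ j)) = (Delta a)^T *m \col_j r ^+ (q ^ j).
Proof.
move=> qpoly_r; apply/matrixP => i k; rewrite !mxE -exprM -expnSr.
have [i_last | i_not_last] := eqVneq i.+1 n.
  rewrite i_last; move: qpoly_r.
  rewrite /root /qpoly hornerD hornerN horner_sum hornerXn subr_eq0 => /eqP ->.
  by apply: eq_bigr => l _; rewrite !mxE i_last eqxx hornerZ hornerXn.
have i1_lt : (i.+1 < n)%N by rewrite ltn_neqAle i_not_last ltn_ord.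
rewrite (bigD1 (Ordinal i1_lt)) //= big1 ?addr0 => [|l l_neq].
  by rewrite !mxE (negbTE i_not_last) eqxx mul1r.
rewrite !mxE (negbTE i_not_last); case: eqP => [l_eq | _]; last by rewrite mul0r.
by case/eqP: l_neq; apply: val_inj.
Qed.

Hypothesis q_gt1 : (1 < q)%N.

Lemma size_qpoly n (a : 'I_n.+1 -> L) : size (qpoly a) = (q ^ n.+1).+1.
Proof.
rewrite size_polyDl ?size_polyXn // size_polyN ltnS.
by apply: leq_trans (size_sum_qmonomials q_gt1 a) _; rewrite ltn_exp2l.
Qed.

Hypothesis pcharq : [pchar L].-nat q.

(* Every exponent q ^ j.+1 vanishes in L, so the derivative of qpoly is -a_0. *)
Lemma separable_qpoly n (a : 'I_n.+1 -> L) : a ord0 != 0 -> separable_poly (qpoly a).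
Proof.
move=> a0; have qX0 j : 'X^(q ^ j.+1) ^`() = 0 :> {poly L}.
  by rewrite derivXn -scaler_nat natrX pchar_nat_natr0 // expr0n scale0r.
have deriv_qpoly : (qpoly a)^`() = - (a ord0)%:P.
  rewrite /qpoly derivB qX0 sub0r linear_sum big_ord_recl /= derivZ expn0 expr1 derivX.
  by rewrite big1 ?addr0 ?alg_polyC // => j _; rewrite derivZ /bump leq0n add1n qX0 scaler0.
by rewrite unlock deriv_qpoly -polyCN -alg_polyC coprimepZr ?coprimep1 ?oppr_eq0.
Qed.

Hypothesis sep_closed :
  forall p : {poly L}, separable_poly p -> (1 < size p)%N -> exists x, root p x.

Lemma exists_frob_fundamental_mx n (a : 'I_n -> L) : Delta a \in unitmx ->
  exists W : 'M[L]_n, W \in unitmx /\ frobmx q W = (Delta a)^T *m W.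
Proof.
case: n a => [|n] a Du.
  by exists 1%:M; split; [rewrite unitmx1 | apply/matrixP => -[]].
have [rs [uniq_rs roots_rs size_rs]] := sep_closed_uniq_roots sep_closed
  (separable_qpoly (Delta_unitmx_coef0 Du)).
rewrite size_qpoly /= in size_rs.
have size_rs_gt : (q ^ n < size rs)%N by rewrite size_rs ltn_exp2l.
have rankA := moore_rank q_gt1 uniq_rs size_rs_gt.
move: (maxrankfun _) (maxrowsub_free (moore q n.+1 rs)); rewrite rankA => g g_free.
exists (rowsub g (moore q n.+1 rs))^T; split; first by rewrite unitmx_tr -row_free_unit.
apply/matrixP => i j; have rs_gj : root (qpoly a) rs`_(g j) by apply/(allP roots_rs)/mem_nth.
have := congr1 (fun M : 'cV[L]_n.+1 => M i 0) (qpoly_root_frob rs_gj).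
by rewrite !mxE => ->; apply: eq_bigr => l _; rewrite !mxE.
Qed.

End DeltaQPolynomial.

Theorem corollary4p4 (K : fieldType) (q : nat)
  (K_infinite : forall s : seq K, exists x : K, x \notin s)
  (F : finFieldType) (f : {rmorphism F -> K}) (cardF : #|F| = q)
  (n : nat) (B N : 'M[K]_n) (a : 'I_n -> K)
  (HB : B \in unitmx) (HN : N \in unitmx)
  (HNB : invmx N *m B *m frobmx q N = Delta a)
  (L : fieldType) (iota : {rmorphism K -> L}) (HL : is_sep_closure iota) :
  forall x : L,
    splitting_field_sys iota q B x <-> splitting_field_sys iota q (Delta_star a) x.
Proof.
(* K_infinite only serves to guarantee that some N exists; here N is given. *)
move=> x.
have q_gt1 : (1 < q)%N by rewrite -cardF finNzRing_gt1.
have pcharqK : [pchar K].-nat q by rewrite -cardF; apply: pchar_nat_card f.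
have pcharqL : [pchar L].-nat q by rewrite (eq_pnat _ (fmorph_pchar iota)).
have frob_fixed (s : L) : s ^+ q = s -> exists k, s = iota k.
  by rewrite -cardF => /(frob_fixed_card (iota \o f))[c ->]; exists (f c).
have Delta_unit : Delta a \in unitmx.
  by rewrite -HNB !unitmx_mul unitmx_inv HN HB frobmx_unitmx.
have [|W [W_unit W_frob]] := exists_frob_fundamental_mx q_gt1 pcharqL HL.2 (a := iota \o a).
  by rewrite -map_Delta map_unitmx.
apply: iff_trans (splitting_field_sys_gauge iota pcharqK HN HNB x) _.
by apply: (splitting_field_sys_dual pcharqK frob_fixed Delta_unit W_unit); rewrite map_Delta.
Qed.
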